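(* Let $m\ge5$ be an odd integer and $n=\frac{3^m+1}{4}$. Then $\delta_1=\frac{3^{m-1}-1}{8}$ and $\delta_2=\frac{3^{m-1}-1}{8}-2$ are the largest and the second largest $3$-cyclotomic coset leaders modulo $n$, respectively, and $|C_{\delta_1}|=|C_{\delta_2}|=2m$.
   Context: For $0\le s\le n-1$, $C_s=\{s3^i\bmod n:i\ge0\}$ is the $3$-cyclotomic coset of $s$ modulo $n$; its least element is its coset leader. *)

From mathcomp Require Import all_boot.
Set Implicit Arguments. Unset Strict Implicit. Unset Printing Implicit Defensive.

Definition in_coset3 (n s t : nat) : Prop := exists i : nat, t = (s * 3 ^ i) %% n.

Definition coset_leader3 (n s : nat) : Prop :=
  s < n /\ forall t, in_coset3 n s t -> s <= t.

Definition coset_card3 (n s k : nat) : Prop :=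
  exists S : seq nat, uniq S /\ size S = k /\ forall t, (t \in S) <-> in_coset3 n s t.

From mathcomp Require Import all_boot.
From mathcomp Require Import zify.

Set Implicit Arguments.
Unset Strict Implicit.
Unset Printing Implicit Defensive.

(* Since n divides 3^m + 1, multiplication by 3^m acts on every coset as
   t |-> n - t. Let [twist n t] be the parity of t, flipped when t > n/2: for n
   odd it is invariant under t |-> n - t, while multiplication by 3 modulo n
   flips it on (n/6, 5n/6). A nonzero coset avoiding [0, n/6] would, by the
   symmetry, stay inside (n/6, 5n/6), and the m (odd) multiplications taking s
   to n - s would flip the twist: so every leader is at most n/6, i.e. at most
   delta1 = 9u + 1 where 3^(m-3) = 8u + 1. Moreover 9u is not a leader, as u
   lies in its coset. For s = delta1 and s = delta2 the elements s 3^i with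
   0 < i < m are explicit (2 (s 3^(i+1) mod n) = n - a 3^i with a = 1, resp.
   a = 13, as long as a 3^i <= n) and lie strictly between s and n - s; with
   the symmetry, the coset is s 3^i for i < 2m, all distinct and at least s. *)

Section PowerOrbit.

Variable n : nat.

Lemma orbitS s i : s * 3 ^ i.+1 %% n = 3 * (s * 3 ^ i %% n) %% n.
Proof. by rewrite modnMmr expnS mulnCA. Qed.

Lemma orbitD s i k : s * 3 ^ (i + k) %% n = (s * 3 ^ i %% n) * 3 ^ k %% n.
Proof. by rewrite expnD mulnA modnMml. Qed.

Lemma orbit_mod_period s p i :
  s * 3 ^ p %% n = s -> s * 3 ^ i %% n = s * 3 ^ (i %% p) %% n.
Proof.
move=> s_p; rewrite {1}(divn_eq i p); elim: (i %/ p) => [|q IHq].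
  by rewrite mul0n add0n.
by rewrite mulSn -addnA orbitD s_p.
Qed.

Lemma coset_card3_period s p :
  0 < p -> s * 3 ^ p %% n = s ->
  (forall e, 0 < e < p -> s * 3 ^ e %% n != s) -> coset_card3 n s p.
Proof.
move=> p_gt0 s_p aperiodic.
exists [seq s * 3 ^ i %% n | i <- iota 0 p]; split; last split.
- have neq_lt i j : i < j -> j < p -> s * 3 ^ i %% n != s * 3 ^ j %% n.
    move=> ij jp; apply/eqP => eq_ij.
    have /eqP[] := aperiodic (i + (p - j)) ltac:(lia).
    by rewrite orbitD eq_ij -orbitD subnKC // ltnW.
  rewrite map_inj_in_uniq ?iota_uniq // => i j; rewrite !mem_iota /= => ip jp eq_ij.
  case: (ltngtP i j) => // [ij|ji].
    by have := neq_lt i j ij jp; rewrite eq_ij eqxx.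
  by have := neq_lt j i ji ip; rewrite eq_ij eqxx.
- by rewrite size_map size_iota.
- move=> t; split; first by case/mapP=> i _ ->; exists i.
  case=> i ->; rewrite (orbit_mod_period i s_p).
  by apply: map_f; rewrite mem_iota ltn_pmod.
Qed.

End PowerOrbit.

Definition twist n t := odd t (+) (n < 2 * t).

Lemma twist_mul3 n t :
  odd n -> n < 6 * t < 5 * n -> twist n (3 * t %% n) = ~~ twist n t.
Proof.
move=> n_odd /andP[lo hi]; rewrite /twist.
have [lt_n|ge_n] := ltnP (3 * t) n.
  by rewrite modn_small //; do 2 case: ltnP; lia.
have [lt_2n|ge_2n] := ltnP (3 * t) (2 * n).
  by rewrite -(subnKC ge_n) modnDl modn_small //; do 2 case: ltnP; lia.
by rewrite -(subnKC ge_2n) modnMDl modn_small //; do 2 case: ltnP; lia.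
Qed.

Lemma twist_opp n t : odd n -> t <= n -> twist n (n - t) = twist n t.
Proof. by rewrite /twist; lia. Qed.

Section AntipodalPower.

Variables (m n : nat).
Hypothesis n_dvd : n %| 3 ^ m + 1.

Let n_gt0 : 0 < n.
Proof. by apply: dvdn_gt0 n_dvd; rewrite addn1. Qed.

Lemma mul_pow_antipode y : 0 < y < n -> y * 3 ^ m %% n = n - y.
Proof.
move=> /andP[y_gt0 y_lt_n].
have : n %| y * 3 ^ m + y by rewrite -mulnSr -addn1 dvdn_mull.
rewrite {1}(divn_eq (y * 3 ^ m) n) -addnA dvdn_addr ?dvdn_mull //.
case/dvdnP=> k sum_eq.
have := ltn_pmod (y * 3 ^ m) (leq_ltn_trans (leq0n y) y_lt_n).
by case: k sum_eq => [|[|k]]; rewrite ?mulSn; lia.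
Qed.

Lemma orbit_add_antipode s i :
  0 < s * 3 ^ i %% n -> s * 3 ^ (i + m) %% n = n - s * 3 ^ i %% n.
Proof.
by move=> t_gt0; rewrite orbitD mul_pow_antipode // t_gt0 ltn_pmod.
Qed.

Lemma in_coset3_pow_mul u j : 0 < u < n -> j <= 2 * m -> in_coset3 n (3 ^ j * u) u.
Proof.
move=> /andP[u_gt0 u_lt_n] le_j; exists (2 * m - j).
rewrite (mulnC (3 ^ j)) -mulnA -expnD subnKC // mul2n -addnn orbitD.
by rewrite mul_pow_antipode ?u_gt0 // mul_pow_antipode; lia.
Qed.

Lemma coset_has_small_elem s : odd m -> odd n -> 0 < s < n ->
  exists i, 6 * (s * 3 ^ i %% n) <= n.
Proof.
move=> m_odd n_odd /andP[s_gt0 s_lt_n].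
have twist_orbit k : k <= m ->
    (exists i, 6 * (s * 3 ^ i %% n) <= n) \/
    twist n (s * 3 ^ k %% n) = twist n s (+) odd k.
  elim: k => [|k IHk] k_lt_m; first by right; rewrite muln1 modn_small ?addbF.
  case: (IHk (ltnW k_lt_m)) => [|twist_k]; first by left.
  have [small|big] := leqP (6 * (s * 3 ^ k %% n)) n; first by left; exists k.
  have [small'|big'] := leqP (6 * (s * 3 ^ (k + m) %% n)) n.
    by left; exists (k + m).
  rewrite orbit_add_antipode in big'; last by lia.
  by right; rewrite orbitS twist_mul3 ?twist_k /= ?addbN //; lia.
case: (twist_orbit m (leqnn m)) => //.
rewrite mul_pow_antipode ?s_gt0 // (twist_opp n_odd (ltnW s_lt_n)) m_odd addbT.
by case: twist.
Qed.

Lemma coset_leader3_le_sixth s : odd m -> odd n -> coset_leader3 n s -> 6 * s <= n.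
Proof.
move=> m_odd n_odd [s_lt_n s_min]; have [->|s_gt0] := posnP s; first by [].
have [i small] := coset_has_small_elem m_odd n_odd (s := s) ltac:(lia).
by have := s_min _ (ex_intro _ i erefl); lia.
Qed.

Lemma not_coset_leader3_pow_mul u j :
  0 < u < n -> 0 < j <= 2 * m -> ~ coset_leader3 n (3 ^ j * u).
Proof.
move=> u_range /andP[j_gt0 j_le] [_ s_min].
have := s_min u (in_coset3_pow_mul u_range j_le).
rewrite leqNgt ltn_Pmull //; last by case/andP: u_range.
by rewrite -{1}(expn0 3) ltn_exp2l.
Qed.

End AntipodalPower.

Section WindowCoset.

Variables (m n s : nat).
Hypotheses (n_dvd : n %| 3 ^ m + 1) (m_gt0 : 0 < m).
Hypotheses (s_gt0 : 0 < s) (s_lt_half : 2 * s < n).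
Hypothesis window : forall i, 0 < i < m -> s < s * 3 ^ i %% n < n - s.

Lemma orbit_window i : i < m -> s <= s * 3 ^ i %% n <= n - s.
Proof.
case: i => [_|i i_lt_m]; first by rewrite muln1 modn_small; lia.
by have := window (i := i.+1); lia.
Qed.

Lemma orbit_second_half i :
  i < m -> s * 3 ^ (i + m) %% n = n - s * 3 ^ i %% n.
Proof.
move=> i_lt_m; rewrite orbit_add_antipode //.
by have := orbit_window i_lt_m; lia.
Qed.

Lemma orbit_double_period : s * 3 ^ (2 * m) %% n = s.
Proof.
have t_m : s * 3 ^ m %% n = n - s by rewrite mul_pow_antipode //; lia.
by rewrite mul2n -addnn orbit_add_antipode ?t_m //; lia.
Qed.

Lemma window_coset_leader3 : coset_leader3 n s.
Proof.
split=> [|t [i ->]]; first lia.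
rewrite (orbit_mod_period i orbit_double_period).
have : i %% (2 * m) < 2 * m by rewrite ltn_pmod ?muln_gt0.
move: (i %% (2 * m)) => r r_lt.
have [r_lt_m|r_ge_m] := ltnP r m; first by have := orbit_window r_lt_m; lia.
rewrite -(subnK r_ge_m) orbit_second_half; last lia.
by have := orbit_window (i := r - m); lia.
Qed.

Lemma window_coset_card3 : coset_card3 n s (2 * m).
Proof.
apply: coset_card3_period; rewrite ?muln_gt0 ?orbit_double_period //.
move=> e /andP[e_gt0 e_lt].
have [e_lt_m|e_ge_m] := ltnP e m; first by have := window (i := e); lia.
rewrite -(subnK e_ge_m) orbit_second_half; last lia.
case: (posnP (e - m)) => [->|e_gt_m]; first by rewrite muln1 modn_small; lia.
by have := window (i := e - m); lia.
Qed.

End WindowCoset.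

Lemma gap_orbit n t a k :
  0 < a -> 2 * t + a = n -> 3 ^ k * a <= n ->
  2 * (t * 3 ^ k %% n) + 3 ^ k * a = n.
Proof.
move=> a_gt0 gap; elim: k => [|k IHk] le_n.
  by rewrite !expn0 muln1 mul1n modn_small; lia.
have le_n' : 3 ^ k * a <= n.
  by apply: leq_trans le_n; rewrite leq_mul2r leq_pexp2l ?orbT.
rewrite orbitS expnS -mulnA; rewrite expnS -mulnA in le_n.
move: (t * 3 ^ k %% n) (3 ^ k * a) le_n (IHk le_n') => x b le_n gap_x.
by rewrite -(@subnKC n (3 * x)) ?modnDl ?modn_small; lia.
Qed.

Lemma pow3_sub3_mod8 m : 5 <= m -> odd m -> exists u, 3 ^ (m - 3) = 8 * u + 1.
Proof.
move=> m_ge5 m_odd.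
have [k ->] : exists k, m - 3 = 2 * k by exists ((m - 3)./2); lia.
rewrite expnM; exists ((3 ^ 2) ^ k %/ 8).
have mod8 : (3 ^ 2) ^ k %% 8 = 1 by rewrite -modnXm exp1n.
by have := divn_eq ((3 ^ 2) ^ k) 8; lia.
Qed.

Section DeltaCosets.

Variables (m u : nat).
Hypotheses (m_ge5 : 5 <= m) (pow_m3 : 3 ^ (m - 3) = 8 * u + 1).

(* With 3 ^ (m - 3) = 8u + 1 we get n = 54u + 7, delta1 = 9u + 1 and delta2 = 9u - 1. *)
Local Notation n := (54 * u + 7).

Let u_gt0 : 0 < u.
Proof.
have : 3 ^ 2 <= 3 ^ (m - 3) by rewrite leq_pexp2l //; lia.
by rewrite pow_m3; lia.
Qed.

Lemma pow3_pred_eq : 3 ^ m.-1 = 9 * (8 * u + 1).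
Proof. by rewrite -pow_m3 -[9]/(3 ^ 2) -expnD; congr (3 ^ _); lia. Qed.

Lemma pow3_add1_eq : 3 ^ m + 1 = 4 * n.
Proof.
have m_ge3 : 3 <= m by lia.
by rewrite -(subnK m_ge3) expnD pow_m3; lia.
Qed.

Lemma window_delta1 i :
  0 < i < m -> 9 * u + 1 < (9 * u + 1) * 3 ^ i %% n < n - (9 * u + 1).
Proof.
case: i => [//|k] /andP[_ k_lt_m].
have pow_k : 3 ^ k <= 3 ^ (m - 2) by rewrite leq_pexp2l //; lia.
have pow_m2 : 3 ^ (m - 2) = 3 * (8 * u + 1).
  by rewrite -pow_m3 -expnS; congr (3 ^ _); lia.
rewrite expnS mulnA.
have := gap_orbit (t := (9 * u + 1) * 3) (n := n) (a := 1) (k := k) isT.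
by rewrite muln1; lia.
Qed.

Lemma window_delta2 i :
  0 < i < m -> 9 * u - 1 < (9 * u - 1) * 3 ^ i %% n < n - (9 * u - 1).
Proof.
have pow_m4 : 3 ^ (m - 3) = 3 * 3 ^ (m - 4).
  by rewrite -expnS; congr (3 ^ _); lia.
have pow_m4_ge1 : 1 <= 3 ^ (m - 4) by rewrite expn_gt0.
have orbit_gap k :
    k <= m - 4 -> 2 * ((9 * u - 1) * 3 ^ k.+1 %% n) + 3 ^ k * 13 = n.
  move=> k_le; have pow_k : 3 ^ k <= 3 ^ (m - 4) by rewrite leq_pexp2l.
  by rewrite expnS mulnA; apply: gap_orbit => //; lia.
move=> /andP[i_gt0 i_lt_m].
(* The gap formula holds up to i = m - 3; the last two elements are computed directly. *)
have [i_le|i_gt] := leqP i (m - 3).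
  case: i i_gt0 i_le {i_lt_m} => [//|k] _ k_le.
  have : 3 ^ k <= 3 ^ (m - 4) by rewrite leq_pexp2l //; lia.
  by have := orbit_gap k ltac:(lia); lia.
have orbit_m2 : (9 * u - 1) * 3 ^ (m - 2) %% n = 29 * u + 4.
  rewrite (_ : m - 2 = (m - 4).+2) 1?orbitS; last lia.
  have gap := orbit_gap (m - 4) (leqnn _).
  by rewrite modn_small; lia.
have [->|->] : i = m - 2 \/ i = m - 1 by lia.
  by rewrite orbit_m2; lia.
rewrite (_ : m - 1 = (m - 2).+1) 1?orbitS ?orbit_m2; last lia.
by rewrite (_ : 3 * (29 * u + 4) = 33 * u + 5 + n) ?modnDr ?modn_small; lia.
Qed.

Let n_dvd : n %| 3 ^ m + 1.
Proof. by rewrite pow3_add1_eq dvdn_mull. Qed.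

Let m_gt0 : 0 < m.
Proof. exact: leq_trans m_ge5. Qed.

Lemma delta1_leader_card :
  coset_leader3 n (9 * u + 1) /\ coset_card3 n (9 * u + 1) (2 * m).
Proof.
split; [apply: window_coset_leader3 window_delta1 => //|
        apply: window_coset_card3 window_delta1 => //]; lia.
Qed.

Lemma delta2_leader_card :
  coset_leader3 n (9 * u - 1) /\ coset_card3 n (9 * u - 1) (2 * m).
Proof.
split; [apply: window_coset_leader3 window_delta2 => //|
        apply: window_coset_card3 window_delta2 => //]; lia.
Qed.

Lemma coset_leader3_le_delta1 s : odd m -> coset_leader3 n s -> s <= 9 * u + 1.
Proof.
move=> m_odd s_leader; have n_odd : odd n by lia.
by have := coset_leader3_le_sixth n_dvd m_odd n_odd s_leader; lia.
Qed.

Lemma coset_leader3_le_delta2 s :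
  odd m -> coset_leader3 n s -> s != 9 * u + 1 -> s <= 9 * u - 1.
Proof.
move=> m_odd s_leader s_ne; have := coset_leader3_le_delta1 m_odd s_leader.
have [s_eq|] := eqVneq s (9 * u); last by lia.
rewrite s_eq in s_leader.
by case: (not_coset_leader3_pow_mul n_dvd (u := u) (j := 2) _ _ s_leader); lia.
Qed.

End DeltaCosets.

Theorem lemma18 (m : nat) :
  5 <= m -> odd m ->
  let n := (3 ^ m + 1) %/ 4 in
  let d1 := (3 ^ m.-1 - 1) %/ 8 in
  let d2 := (3 ^ m.-1 - 1) %/ 8 - 2 in
  (coset_leader3 n d1 /\
   (forall s, coset_leader3 n s -> s <= d1)) /\
  (coset_leader3 n d2 /\
   (forall s, coset_leader3 n s -> s != d1 -> s <= d2)) /\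
  (coset_card3 n d1 (2 * m) /\ coset_card3 n d2 (2 * m)).
Proof.
move=> m_ge5 m_odd n d1 d2.
have [u pow_m3] := pow3_sub3_mod8 m_ge5 m_odd.
have n_eq : n = 54 * u + 7 by rewrite /n (pow3_add1_eq m_ge5 pow_m3); lia.
have d1_eq : d1 = 9 * u + 1 by rewrite /d1 (pow3_pred_eq m_ge5 pow_m3); lia.
have d2_eq : d2 = 9 * u - 1 by rewrite /d2 (pow3_pred_eq m_ge5 pow_m3); lia.
clearbody n d1 d2; subst n d1 d2.
have [leader1 card1] := delta1_leader_card m_ge5 pow_m3.
have [leader2 card2] := delta2_leader_card m_ge5 pow_m3.
split; [split|split; [split|split]] => //.
- move=> s; exact (coset_leader3_le_delta1 m_ge5 pow_m3 m_odd).
- move=> s; exact (coset_leader3_le_delta2 m_ge5 pow_m3 m_odd).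
Qed.
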